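(* Let $R$ be a finite commutative chain ring with maximal ideal $\langle a\rangle$, $a$ of nilpotency index $t$, residue field $\mathbb F_q$; let $t_i(X_i)$, $I$, $A$ be as in the context, let $\mathcal K$ be a semisimple code in $A$, and let $G_0,\dots,G_t\in R[X_1,\dots,X_r]$ be an admissible family for $\mathcal K$. Let $\mathcal L$ be the code $\langle\bar G_1,\dots,\bar G_t\rangle+\bar I$ in $\mathbb F_q[X_1,\dots,X_r]/\bar I$, where $\bar I=\langle\bar t_1(X_1),\dots,\bar t_r(X_r)\rangle$. Then $d(\mathcal K)=d(\mathcal L)$.
   Context: Bars denote reduction mod $\langle a\rangle$, coefficientwise on polynomials. For $i=1,\dots,r$, $t_i(X_i)\in R[X_i]$ is monic with $\bar t_i$ square-free; $I=\langle t_1(X_1),\dots,t_r(X_r)\rangle$, $A=R[X_1,\dots,X_r]/I$. A semisimple code is an ideal of $A$. $A$ is a free $R$-module with basis the monomials $X_1^{i_1}\cdots X_r^{i_r}$, $0\le i_k<\deg t_k$, and elements are identified with their coefficient vectors in $R^n$, $n=\prod_k\deg t_k$ (similarly for $\mathbb F_q[X_1,\dots,X_r]/\bar I$ over $\mathbb F_q$). The Hamming weight of a vector is its number of nonzero coordinates, and $d(\cdot)$ of a code is the minimum Hamming weight of its nonzero elements. An admissible family for $\mathcal K$ is a family $G_0,\dots,G_t$ of polynomials with $\bigcap_{i=0}^t\mathrm{Ann}_A\langle G_i+I\rangle=0$, $\mathrm{Ann}_A\langle G_i+I\rangle+\mathrm{Ann}_A\langle G_j+I\rangle=A$ for $i\ne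 j$, and $\mathcal K=\langle G_1,aG_2,\dots,a^{t-1}G_t\rangle+I$. *)

From HB Require Import structures.
From mathcomp Require Import all_boot all_order all_algebra.
From mathcomp Require Import mpoly.
Set Implicit Arguments. Unset Strict Implicit. Unset Printing Implicit Defensive.
Import GRing.Theory.
Local Open Scope ring_scope.

Definition rdvd (R : comNzRingType) (x y : R) : Prop := exists z, y = x * z.

(* R is a (commutative) chain ring: its (principal, hence all) ideals are
   linearly ordered by inclusion. *)
Definition chain_ring (R : comNzRingType) : Prop :=
  forall x y : R, rdvd x y \/ rdvd y x.

(* <a> is the (unique) maximal ideal of the local ring R *)
Definition max_ideal_gen (R : comUnitRingType) (a : R) : Prop :=
  a \isn't a GRing.unit /\ forall x : R, x \isn't a GRing.unit -> rdvd a x.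

Definition square_free (F : fieldType) (p : {poly F}) : Prop :=
  forall d : {poly F}, (d * d %| p)%R -> (size d <= 1)%N.

Definition polyXk (R : comNzRingType) (r : nat) (k : 'I_r) (p : {poly R})
  : {mpoly R[r]} := \sum_(j < size p) (p`_j)%:MP_[r] * 'X_k ^+ j.

Definition in_ideal (R : comNzRingType) (r n : nat) (g : 'I_n -> {mpoly R[r]})
  (p : {mpoly R[r]}) : Prop :=
  exists h : 'I_n -> {mpoly R[r]}, p = \sum_(i < n) h i * g i.

Definition inI (R : comNzRingType) (r : nat) (tt : 'I_r -> {poly R})
  (p : {mpoly R[r]}) : Prop := in_ideal (fun k => polyXk k (tt k)) p.

(* Ann_A <G + I>, pulled back to R[X] : { p | p * G in I } *)
Definition inAnn (R : comNzRingType) (r : nat) (tt : 'I_r -> {poly R})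
  (G p : {mpoly R[r]}) : Prop := inI tt (p * G).

Definition admissible (R : comNzRingType) (r t : nat) (tt : 'I_r -> {poly R})
  (G : 'I_t.+1 -> {mpoly R[r]}) : Prop :=
  (forall p, (forall i, inAnn tt (G i) p) -> inI tt p) /\
  (forall i j : 'I_t.+1, i != j ->
     exists u v, inAnn tt (G i) u /\ inAnn tt (G j) v /\ inI tt (1 - (u + v))).

(* reduced representatives: the standard monomial basis of A, i.e.
   deg_{X_k} < deg t_k for all k *)
Definition reduced (R : comNzRingType) (r : nat) (tt : 'I_r -> {poly R})
  (p : {mpoly R[r]}) : Prop :=
  forall m, m \in msupp p -> forall k : 'I_r, (m k < (size (tt k)).-1)%N.

Definition hweight (R : comNzRingType) (r : nat) (p : {mpoly R[r]}) : nat :=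
  size (msupp p).

(* elements of the code  <c_1 H_1, ..., c_t H_t> + I  (H = G restricted to
   indices 1..t), given by their reduced representatives *)
Definition in_code (R : comNzRingType) (r t : nat) (tt : 'I_r -> {poly R})
  (gen : 'I_t.+1 -> {mpoly R[r]}) (p : {mpoly R[r]}) : Prop :=
  reduced tt p /\
  exists h : 'I_t.+1 -> {mpoly R[r]},
    inI tt (p - \sum_(i < t.+1 | (0 < i)%N) h i * gen i).

Definition is_min_dist (R : comNzRingType) (r : nat) (C : {mpoly R[r]} -> Prop)
  (d : nat) : Prop :=
  (exists c, C c /\ c != 0 /\ hweight c = d) /\
  (forall c, C c -> c != 0 -> (d <= hweight c)%N).

From HB Require Import structures.
From mathcomp Require Import all_boot all_order all_algebra.
From mathcomp Require Import mpoly.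
From mathcomp Require Import ring zify.
Set Implicit Arguments. Unset Strict Implicit. Unset Printing Implicit Defensive.
Import GRing.Theory.
Local Open Scope ring_scope.

(* Write b = a^(t-1).  In the chain ring R, b x = 0 iff pi x = 0, and a x = 0 iff
   x = b y for some y, so coefficientwise multiplication by b is a support-preserving
   bijection from F[X] onto the polynomials over R killed by a.  A nonzero c in K has a
   nonzero multiple a^k c = b w killed by a and supported inside c, and a word l of L
   lifts to pi w = l with b w in K; so both minima agree once we know that b w in K
   forces pi w in L.  For this, the admissible family yields e_0, ..., e_t with
   e_i G_j in I for j <> i, e_i = 1 on G_i and sum e_i = 1 modulo I; as A is finite,
   each e_i is also a multiple of G_i modulo I.  Multiplying by e_0 kills the
   components along G_1, ..., G_t, and b x in I gives pi x in Ibar by uniqueness of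
   normal forms modulo I. *)

Section Ideal.
Variables (R : comNzRingType) (r n : nat) (g : 'I_n -> {mpoly R[r]}).
Implicit Types (p q : {mpoly R[r]}).

Lemma in_ideal0 : in_ideal g 0.
Proof. by exists (fun=> 0); rewrite big1 // => i _; rewrite mul0r. Qed.

Lemma in_idealD p q : in_ideal g p -> in_ideal g q -> in_ideal g (p + q).
Proof.
case=> h1 ->; case=> h2 ->; exists (fun i => h1 i + h2 i).
by rewrite -big_split; apply: eq_bigr => i _; rewrite mulrDl.
Qed.

Lemma in_idealMl q p : in_ideal g p -> in_ideal g (q * p).
Proof.
case=> h ->; exists (fun i => q * h i).
by rewrite mulr_sumr; apply: eq_bigr => i _; rewrite mulrA.
Qed.

Lemma in_idealMr q p : in_ideal g p -> in_ideal g (p * q).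
Proof. by rewrite mulrC; apply: in_idealMl. Qed.

Lemma in_idealN p : in_ideal g p -> in_ideal g (- p).
Proof. by rewrite -mulN1r; apply: in_idealMl. Qed.

Lemma in_idealB p q : in_ideal g p -> in_ideal g q -> in_ideal g (p - q).
Proof. by move=> Ip Iq; apply: in_idealD => //; apply: in_idealN. Qed.

Lemma in_idealZ c p : in_ideal g p -> in_ideal g (c *: p).
Proof. by rewrite -mul_mpolyC; apply: in_idealMl. Qed.

Lemma in_ideal_sum (I : Type) (s : seq I) (P : pred I) (f : I -> {mpoly R[r]}) :
  (forall i, P i -> in_ideal g (f i)) -> in_ideal g (\sum_(i <- s | P i) f i).
Proof.
move=> If; elim/big_rec: _ => [|i x Pi Ix]; first exact: in_ideal0.
by apply: in_idealD => //; apply: If.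
Qed.

Lemma in_ideal_gen k : in_ideal g (g k).
Proof.
exists (fun i => (i == k)%:R); rewrite (bigD1 k) //= eqxx mul1r big1 ?addr0 //.
by move=> i /negbTE ->; rewrite mul0r.
Qed.

Lemma in_ideal_prodB (I : Type) (s : seq I) (A B : I -> {mpoly R[r]}) :
  (forall i, in_ideal g (A i - B i)) ->
  in_ideal g (\prod_(i <- s) A i - \prod_(i <- s) B i).
Proof.
move=> IAB; elim: s => [|i s IHs]; first by rewrite !big_nil subrr; apply: in_ideal0.
rewrite !big_cons.
have -> : A i * \prod_(j <- s) A j - B i * \prod_(j <- s) B j =
   A i * (\prod_(j <- s) A j - \prod_(j <- s) B j) + (A i - B i) * \prod_(j <- s) B j.
  by ring.
by apply: in_idealD; [apply: in_idealMl | apply: in_idealMr].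
Qed.

End Ideal.

Section PolyXk.
Variables (R : comNzRingType) (r : nat) (k : 'I_r).

Lemma polyXkE (p : {poly R}) :
  polyXk k p = (map_poly (fun c => c%:MP_[r]) p).['X_k].
Proof.
rewrite horner_coef size_map_inj_poly ?raddf0 //; last exact: (can_inj (@mpolyCK _ _)).
by apply: eq_bigr => i _; rewrite coef_map.
Qed.

Fact polyXk_is_zmod_morphism : zmod_morphism (@polyXk R r k).
Proof. by move=> p q; rewrite !polyXkE rmorphB hornerD hornerN. Qed.

Fact polyXk_is_monoid_morphism : monoid_morphism (@polyXk R r k).
Proof. by split=> [|p q]; rewrite !polyXkE ?rmorph1 ?hornerC // rmorphM hornerM. Qed.

Fact polyXk_is_scalable : scalable (@polyXk R r k).
Proof.
by move=> c p; rewrite !polyXkE -mul_polyC rmorphM /= map_polyC hornerM hornerC mul_mpolyC.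
Qed.

HB.instance Definition _ := GRing.isZmodMorphism.Build _ _ (@polyXk R r k)
  polyXk_is_zmod_morphism.
HB.instance Definition _ := GRing.isMonoidMorphism.Build _ _ (@polyXk R r k)
  polyXk_is_monoid_morphism.
HB.instance Definition _ := GRing.isScalable.Build _ _ _ _ (@polyXk R r k)
  polyXk_is_scalable.

Lemma polyXkXn n : polyXk k ('X^n : {poly R}) = 'X_k ^+ n.
Proof. by rewrite polyXkE map_polyXn hornerXn. Qed.

End PolyXk.

Lemma map_polyXk (R S : comNzRingType) (f : {rmorphism R -> S}) r (k : 'I_r) (p : {poly R}) :
  map_mpoly f (polyXk k p) = polyXk k (map_poly f p).
Proof.
rewrite polyXkE [RHS]polyXkE -[in RHS](map_mpolyX f U_(k)) -horner_map.
by rewrite -!map_poly_comp; congr (_.[_]); apply: eq_map_poly => c /=; rewrite map_mpolyC.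
Qed.

Lemma inI_map (R S : comNzRingType) (f : {rmorphism R -> S}) r (tt : 'I_r -> {poly R})
    (p : {mpoly R[r]}) :
  inI tt p -> inI (fun k => map_poly f (tt k)) (map_mpoly f p).
Proof.
case=> h ->; exists (fun k => map_mpoly f (h k)); rewrite rmorph_sum.
by apply: eq_bigr => k _; rewrite rmorphM /= map_polyXk.
Qed.

Lemma reduced_msupp (R S : comNzRingType) r (tt : 'I_r -> {poly R}) (ss : 'I_r -> {poly S})
    (p : {mpoly R[r]}) (q : {mpoly S[r]}) :
  (forall k, size (ss k) = size (tt k)) -> {subset msupp q <= msupp p} ->
  reduced tt p -> reduced ss q.
Proof. by move=> Ess sub Hp m /sub /Hp lt k; rewrite Ess. Qed.

Section Reduced.
Variables (R : comNzRingType) (r : nat) (tt : 'I_r -> {poly R}).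
Implicit Types (p q : {mpoly R[r]}).

Lemma reducedZ c p : reduced tt p -> reduced tt (c *: p).
Proof. exact/reduced_msupp/msuppZ_le. Qed.

Lemma reduced_sum (I : Type) (s : seq I) (P : pred I) (f : I -> {mpoly R[r]}) :
  (forall i, P i -> reduced tt (f i)) -> reduced tt (\sum_(i <- s | P i) f i).
Proof.
move=> Hf; elim/big_rec: _ => [m|i x Pi Hx m]; first by rewrite msupp0.
by move/msuppD_le; rewrite mem_cat => /orP [/(Hf _ Pi)|/Hx].
Qed.

End Reduced.

Lemma msupp_polyXk (R : comNzRingType) r (k : 'I_r) (q : {poly R}) m :
  m \in msupp (polyXk k q) -> exists2 j, (j < size q)%N & m = (U_(k) *+ j)%MM.
Proof.
have -> : polyXk k q = \sum_(j < size q) q`_j *: 'X_[(U_(k) *+ j)%MM].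
  by apply: eq_bigr => j _; rewrite mpolyXn mul_mpolyC.
move/msupp_sum_le/flattenP => [s /mapP [j _ ->]] /msuppZ_le.
by rewrite msuppX inE => /eqP ->; exists j.
Qed.

Lemma msupp_prod_polyXk (R : comNzRingType) r (s : seq 'I_r) (q : 'I_r -> {poly R}) m :
  uniq s -> m \in msupp (\prod_(k <- s) polyXk k (q k)) ->
  forall k, (m k < if k \in s then size (q k) else 1)%N.
Proof.
elim: s m => [|k0 s IHs] m.
  by rewrite big_nil msupp1 inE => _ /eqP -> k; rewrite mnm0E.
rewrite big_cons /= => /andP [k0s us] /msuppM_le /allpairsP [[m1 m2] /= [m1p m2p ->]] k.
have [j jlt m1E] := msupp_polyXk m1p.
have := IHs _ us m2p k; rewrite mnmDE m1E mulmnE mnm1E inE.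
case: (eqVneq k0 k) => [<-|nk] /=.
  by rewrite (negbTE k0s) ltnS leqn0 => /eqP ->; rewrite mul1n addn0.
by rewrite mul0n add0n.
Qed.

Section NormalForm.
Variables (R : comNzRingType) (r : nat) (tt : 'I_r -> {poly R}).
Implicit Types (p q : {mpoly R[r]}).

Definition nf_monomial (m : 'X_{1..r}) : {mpoly R[r]} :=
  \prod_(k < r) polyXk k (Pdiv.Ring.rmodp 'X^(m k) (tt k)).

Definition nf p : {mpoly R[r]} := \sum_(m <- msupp p) p@_m *: nf_monomial m.

Lemma nf_seqE p s : uniq s -> {subset msupp p <= s} ->
  nf p = \sum_(m <- s) p@_m *: nf_monomial m.
Proof.
move=> us ps; rewrite (bigID (mem (msupp p))) /= [X in _ = _ + X]big1 ?addr0; last first.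
  by move=> m /memN_msupp_eq0 ->; rewrite scale0r.
rewrite -big_filter; apply: perm_big; apply: uniq_perm; rewrite ?filter_uniq ?msupp_uniq //.
by move=> m; rewrite mem_filter; case: (boolP (m \in msupp p)) => // /ps ->.
Qed.

Lemma nf_is_linear : linear nf.
Proof.
move=> c p q; pose s := undup (msupp p ++ msupp q).
have nfE (u : {mpoly R[r]}) : {subset msupp u <= msupp p ++ msupp q} ->
    nf u = \sum_(m <- s) u@_m *: nf_monomial m.
  by move=> su; apply: nf_seqE; rewrite ?undup_uniq // => m /su; rewrite mem_undup.
have supp_cpq : {subset msupp (c *: p + q) <= msupp p ++ msupp q}.
  by move=> m /msuppD_le; rewrite !mem_cat => /orP [/msuppZ_le ->|->]; rewrite ?orbT.
rewrite (nfE _ supp_cpq) (nfE p) => [|m]; last by rewrite mem_cat => ->.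
rewrite (nfE q) => [|m]; last by rewrite mem_cat orbC => ->.
rewrite scaler_sumr -big_split; apply: eq_bigr => m _.
by rewrite mcoeffD mcoeffZ scalerDl scalerA.
Qed.

HB.instance Definition _ := GRing.isLinear.Build R {mpoly R[r]} {mpoly R[r]} _ nf
  nf_is_linear.

Lemma nfX m : nf 'X_[m] = nf_monomial m.
Proof. by rewrite /nf msuppX big_seq1 mcoeffX eqxx scale1r. Qed.

Hypothesis tt_monic : forall k, tt k \is monic.

Lemma nf_monomial_reduced m : reduced tt (nf_monomial m).
Proof.
move=> m' /(msupp_prod_polyXk (index_enum_uniq _)) lt_m' k.
rewrite -ltnS prednK ?lt0n ?size_poly_eq0 ?monic_neq0 //.
have := lt_m' k; rewrite mem_index_enum => /leq_ltn_trans; apply.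
exact/Pdiv.Ring.ltn_rmodpN0/monic_neq0.
Qed.

Lemma nf_reduced p : reduced tt (nf p).
Proof. by apply: reduced_sum => m _; apply/reducedZ/nf_monomial_reduced. Qed.

Lemma inI_sub_nf p : inI tt (p - nf p).
Proof.
rewrite {1}[p]mpolyE /nf -sumrB; apply: in_ideal_sum => m _.
rewrite -scalerBr; apply: in_idealZ; rewrite /nf_monomial mpolyXE_id.
apply: in_ideal_prodB => k; rewrite -polyXkXn -rmorphB.
rewrite {1}(Pdiv.RingMonic.rdivp_eq (tt_monic k) 'X^(m k)) addrK rmorphM.
exact/in_idealMl/in_ideal_gen.
Qed.

Lemma nf_mulX_polyXk m k (q : {poly R}) :
  nf ('X_[m] * polyXk k q) =
  (\prod_(i < r | i != k) polyXk i (Pdiv.Ring.rmodp 'X^(m i) (tt i))) *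
  polyXk k (Pdiv.Ring.rmodp ('X^(m k) * q) (tt k)).
Proof.
set P := \prod_(i < r | i != k) _.
have nf_shift j : nf_monomial (m + U_(k) *+ j)%MM =
    P * polyXk k (Pdiv.Ring.rmodp 'X^(m k + j) (tt k)).
  rewrite /nf_monomial (bigD1 k) //= mulrC mnmDE mulmnE mnm1E eqxx mul1n.
  congr (_ * _); apply: eq_bigr => i ik.
  by rewrite mnmDE mulmnE mnm1E eq_sym (negbTE ik) mul0n addn0.
rewrite -[q]coefK poly_def.
have -> : 'X^(m k) * \sum_(j < size q) q`_j *: 'X^j =
    \sum_(j < size q) q`_j *: 'X^(m k + j).
  by rewrite mulr_sumr; apply: eq_bigr => j _; rewrite -scalerAr -exprD.
rewrite (Pdiv.RingMonic.rmodp_sum (tt_monic k)) !linear_sum mulr_sumr linear_sum.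
rewrite mulr_sumr; apply: eq_bigr => j _ /=.
rewrite !linearZ /= polyXkXn -scalerAr mpolyXn -mpolyXD linearZ /= nfX nf_shift.
by rewrite (Pdiv.RingMonic.rmodpZ (tt_monic k)) linearZ /= scalerAr.
Qed.

Lemma nf_inI p : inI tt p -> nf p = 0.
Proof.
case=> h ->; rewrite linear_sum big1 // => k _.
rewrite [h k]mpolyE mulr_suml linear_sum big1 // => m _.
rewrite -scalerAl linearZ /= nf_mulX_polyXk.
by rewrite Pdiv.RingMonic.rmodp_mull ?tt_monic // raddf0 mulr0 scaler0.
Qed.

End NormalForm.

Section FiniteQuotient.
Variables (R : finComNzRingType) (r : nat) (tt : 'I_r -> {poly R}).
Implicit Types (p q g : {mpoly R[r]}).

Lemma reduced_finite : exists (T : finType) (f : {mpoly R[r]} -> T),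
  forall p q, reduced tt p -> reduced tt q -> f p = f q -> p = q.
Proof.
pose M := \max_k size (tt k).
pose code p : {ffun {ffun 'I_r -> 'I_M} -> R} :=
  [ffun x : {ffun 'I_r -> 'I_M} => p@_[multinom (x k : nat) | k < r]].
exists {ffun {ffun 'I_r -> 'I_M} -> R}, code => p q red_p red_q code_pq.
apply/mpolyP => m.
have [supp_m|] := boolP ((m \in msupp p) || (m \in msupp q)); last first.
  by rewrite negb_or => /andP [/memN_msupp_eq0 -> /memN_msupp_eq0 ->].
have m_lt k : (m k < M)%N.
  have lt_m : (m k < (size (tt k)).-1)%N by case/orP: supp_m => [/red_p|/red_q]; apply.
  exact: leq_trans lt_m (leq_trans (leq_pred _) (leq_bigmax k)).
pose x : {ffun 'I_r -> 'I_M} := [ffun k => Ordinal (m_lt k)].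
have -> : m = [multinom (x k : nat) | k < r] by apply/mnmP => k; rewrite mnmE ffunE.
by move/ffunP: code_pq => /(_ x); rewrite !ffunE.
Qed.

Hypothesis tt_monic : forall k, tt k \is monic.

Lemma inI_expr_repeat g : exists n1 n2, (n1 < n2)%N /\ inI tt (g ^+ n1 - g ^+ n2).
Proof.
have [T [f f_inj]] := reduced_finite.
pose h (n : 'I_#|T|.+1) := f (nf tt (g ^+ n)).
have eq_h i j : h i = h j -> inI tt (g ^+ i - g ^+ j).
  move=> h_ij; have nf_ij : nf tt (g ^+ i) = nf tt (g ^+ j).
    by apply: f_inj h_ij; apply: nf_reduced.
  have -> : g ^+ i - g ^+ j = (g ^+ i - nf tt (g ^+ i)) - (g ^+ j - nf tt (g ^+ j)).
    by rewrite nf_ij opprB addrA subrK.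
  exact/in_idealB/inI_sub_nf/tt_monic/inI_sub_nf.
have /injectivePn [i [j neq_ij /eq_h Iij]] : ~~ injectiveb h.
  by apply/injectiveP => /leq_card; rewrite card_ord ltnn.
case: (ltngtP i j) => [lt_ij|lt_ji|/val_inj eq_ij]; last by rewrite eq_ij eqxx in neq_ij.
- by exists i, j.
- by exists j, i; split => //; rewrite -opprB; apply: in_idealN.
Qed.

End FiniteQuotient.

Lemma sum_split_ord0 (V : nmodType) n (f : 'I_n.+1 -> V) :
  \sum_i f i = f ord0 + \sum_(i < n.+1 | (0 < i)%N) f i.
Proof. by rewrite (bigD1 ord0) //=; congr (_ + _); apply: eq_bigl => i; rewrite lt0n. Qed.

Section Separators.
Variables (R : comNzRingType) (r t : nat) (tt : 'I_r -> {poly R}).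
Variables (G : 'I_t.+1 -> {mpoly R[r]}).
Hypothesis adm : admissible tt G.

Definition separating (e : 'I_t.+1 -> {mpoly R[r]}) : Prop :=
  (forall i j, j != i -> inI tt (e i * G j)) /\ (forall i, inI tt ((1 - e i) * G i)).

(* For j <> i, comaximality of the annihilators gives u + v = 1 modulo I with u G_i and
   v G_j in I; then e_i is the product of these v over j <> i. *)
Lemma admissible_separating : exists e, separating e.
Proof.
have uv_ex i j : exists uv : {mpoly R[r]} * {mpoly R[r]}, i != j ->
    [/\ inAnn tt (G i) uv.1, inAnn tt (G j) uv.2 & inI tt (1 - (uv.1 + uv.2))].
  have [_|/adm.2 [u [v [Iu [Iv Iuv]]]]] := eqVneq i j; first by exists (0, 0).
  by exists (u, v).
have [uv Huv] := fin_all_exists (fun i => fin_all_exists (uv_ex i)).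
exists (fun i => \prod_(j | j != i) (uv i j).2); split=> [i j ji|i].
  rewrite (bigD1 j) //= mulrAC; apply: in_idealMr.
  by have /Huv[] : i != j by rewrite eq_sym.
elim/big_rec: _ => [|j e ji Ie]; first by rewrite subrr mul0r; apply: in_ideal0.
have /Huv[Iu _ Iuv] : i != j by rewrite eq_sym.
move: (uv i j) Iu Iuv => [u v] /= Iu Iuv.
have -> : (1 - v * e) * G i = (1 - (u + v)) * (e * G i) + u * G i * e + (1 - e) * G i.
  by ring.
by apply: in_idealD Ie; apply: in_idealD; [apply: in_idealMr Iuv | apply: in_idealMr Iu].
Qed.

Lemma separating_sum e : separating e -> inI tt (1 - \sum_i e i).
Proof.
case=> e_sep e_G; apply: adm.1 => j; rewrite /inAnn (bigD1 j) //= opprD addrA mulrDl.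
apply: in_idealD; first exact: e_G.
rewrite mulNr mulr_suml; apply/in_idealN/in_ideal_sum => i ij.
by apply: e_sep; rewrite eq_sym.
Qed.

Lemma separating_cancel e i n x : separating e ->
  inI tt (e i * G i ^+ n * x) -> inI tt (e i * x).
Proof.
case=> e_sep _; elim: n x => [|n IHn] x; first by rewrite expr0 mulr1.
rewrite exprSr mulrA -(mulrA _ (G i)) => /IHn Ix; apply: adm.1 => j.
have [->|ji] := eqVneq j i; rewrite /inAnn mulrAC -?mulrA //.
by rewrite mulrA; apply/in_idealMr/e_sep.
Qed.

Lemma separating_mul0 e x (h : 'I_t.+1 -> {mpoly R[r]}) : separating e ->
  inI tt (x - \sum_(i < t.+1 | (0 < i)%N) h i * G i) -> inI tt (e ord0 * x).
Proof.
case=> e_sep _ Ix; rewrite -[x](subrK (\sum_(i < t.+1 | (0 < i)%N) h i * G i)).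
rewrite mulrDr mulr_sumr; apply: in_idealD; first exact: in_idealMl.
apply: in_ideal_sum => i i_gt0; rewrite mulrCA; apply/in_idealMl/e_sep.
by rewrite -val_eqE /= -lt0n.
Qed.

Lemma separating_decomp e (y : 'I_t.+1 -> {mpoly R[r]}) w : separating e ->
  (forall i, inI tt (e i - y i * G i * e i)) ->
  inI tt (w - w * e ord0 - \sum_(i < t.+1 | (0 < i)%N) w * e i * y i * G i).
Proof.
move=> sep_e Iy; set T := \sum_(i < t.+1 | (0 < i)%N) _.
have -> : w - w * e ord0 - T = w * (1 - \sum_i e i) +
    \sum_(i < t.+1 | (0 < i)%N) w * (e i - y i * G i * e i).
  have -> : \sum_(i < t.+1 | (0 < i)%N) w * (e i - y i * G i * e i) =
      w * \sum_(i < t.+1 | (0 < i)%N) e i - T.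
    by rewrite mulr_sumr -sumrB; apply: eq_bigr => i _; ring.
  by rewrite sum_split_ord0; ring.
apply: in_idealD; first exact/in_idealMl/separating_sum.
by apply: in_ideal_sum => i _; apply/in_idealMl/Iy.
Qed.

End Separators.

Lemma separating_in_gen (R : finComNzRingType) r t (tt : 'I_r -> {poly R})
    (G : 'I_t.+1 -> {mpoly R[r]}) e :
  (forall k, tt k \is monic) -> admissible tt G -> separating tt G e ->
  forall i, exists y, inI tt (e i - y * G i * e i).
Proof.
move=> tt_monic adm sep_e i; have [n1 [n2 [lt_n In]]] := inI_expr_repeat tt_monic (G i).
have Ie : inI tt (e i * G i ^+ n1 * (1 - G i ^+ (n2 - n1))).
  by rewrite -mulrA mulrBr mulr1 -exprD subnKC ?(ltnW lt_n) //; apply: in_idealMl.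
exists (G i ^+ (n2 - n1).-1); rewrite -exprSr prednK ?subn_gt0 //.
by move: (separating_cancel adm sep_e Ie); rewrite mulrBr mulr1 mulrC.
Qed.

Lemma scale_expr_last_neq0 (R : pzRingType) (V : lmodType R) (a : R) (x : V) n :
  a ^+ n *: x = 0 -> x != 0 -> exists k, a ^+ k *: x != 0 /\ a ^+ k.+1 *: x = 0.
Proof.
elim: n => [|n IHn anx x0]; first by rewrite scale1r => ->; rewrite eqxx.
by have [/IHn/(_ x0)|] := eqVneq (a ^+ n *: x) 0; last exists n.
Qed.

Section ChainRing.
Variables (R : comUnitRingType) (F : comNzRingType) (pi : {rmorphism R -> F}).
Variables (a : R) (t : nat).
Hypotheses (chain : chain_ring R) (max_a : max_ideal_gen a) (t_gt0 : (0 < t)%N).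
Hypotheses (at0 : a ^+ t = 0) (at1 : a ^+ t.-1 != 0).
Hypothesis ker_pi : forall x, pi x = 0 <-> rdvd a x.
(* Multiplication by [b] identifies [F = R / <a>] with the annihilator of [a]. *)
Local Notation b := (a ^+ t.-1).

Lemma mulb_eq0 x : b * x = 0 <-> pi x = 0.
Proof.
split=> [bx0|/ker_pi [y ->]]; last by rewrite mulrA -exprSr prednK // at0 mul0r.
apply/ker_pi; have [x_unit|] := boolP (x \is a GRing.unit); last exact: max_a.2.
by move/eqP: at1; rewrite -(mulrK x_unit b) bx0 mul0r.
Qed.

Lemma ann_a_mulb x : a * x = 0 -> exists y, x = b * y.
Proof.
move=> ax0; have [[z bz]|[y ->]] := chain x b; last by exists y.
have [z_unit|/max_a.2 [z' zE]] := boolP (z \is a GRing.unit).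
  by exists z^-1; rewrite bz mulrK.
by move/eqP: at1; rewrite bz zE mulrA (mulrC x) ax0 mul0r.
Qed.

Lemma scaleb_eq0 n (p : {mpoly R[n]}) : b *: p = 0 <-> map_mpoly pi p = 0.
Proof.
split=> [bp0|pip0]; apply/mpolyP => m; rewrite mcoeff0.
  by rewrite mcoeff_map_mpoly; apply/mulb_eq0; rewrite -mcoeffZ bp0 mcoeff0.
by rewrite mcoeffZ; apply/mulb_eq0; rewrite -mcoeff_map_mpoly pip0 mcoeff0.
Qed.

Lemma msupp_scaleb n (p : {mpoly R[n]}) : msupp (b *: p) =i msupp (map_mpoly pi p).
Proof.
move=> m; rewrite !mcoeff_msupp mcoeffZ mcoeff_map_mpoly; congr negb.
by apply/eqP/eqP => /mulb_eq0.
Qed.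

Lemma hweight_scaleb n (p : {mpoly R[n]}) : hweight (b *: p) = hweight (map_mpoly pi p).
Proof. by apply/perm_size/uniq_perm; rewrite ?msupp_uniq //; apply: msupp_scaleb. Qed.

Lemma ann_a_scaleb n (x : {mpoly R[n]}) : a *: x = 0 -> exists w, x = b *: w.
Proof.
move=> ax0; have y_ex m : exists y, x@_m == b * y.
  have [|y ->] := @ann_a_mulb x@_m; last by exists y.
  by rewrite -mcoeffZ ax0 mcoeff0.
exists (\sum_(m <- msupp x) xchoose (y_ex m) *: 'X_[m]).
rewrite scaler_sumr {1}[x]mpolyE; apply: eq_bigr => m _.
by rewrite scalerA -(eqP (xchooseP (y_ex m))).
Qed.

Lemma map_mpoly_surj n : (forall y, exists x, pi x = y) ->
  forall l : {mpoly F[n]}, exists w, map_mpoly pi w = l.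
Proof.
move=> pi_surj l; have x_ex m : exists x, pi x == l@_m.
  by have [x <-] := pi_surj l@_m; exists x.
exists (\sum_(m <- msupp l) xchoose (x_ex m) *: 'X_[m]).
rewrite rmorph_sum [RHS]mpolyE; apply: eq_bigr => m _.
by rewrite /= map_mpolyZ map_mpolyX (eqP (xchooseP (x_ex m))).
Qed.

End ChainRing.

Section Reduction.
Variables (R : finComUnitRingType) (F : comNzRingType) (pi : {rmorphism R -> F}).
Variables (a : R) (t r : nat) (tt : 'I_r -> {poly R}) (G : 'I_t.+1 -> {mpoly R[r]}).
Hypotheses (chain : chain_ring R) (max_a : max_ideal_gen a) (t_gt0 : (0 < t)%N).
Hypotheses (at0 : a ^+ t = 0) (at1 : a ^+ t.-1 != 0).
Hypothesis ker_pi : forall x, pi x = 0 <-> rdvd a x.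
Hypotheses (tt_monic : forall k, tt k \is monic) (adm : admissible tt G).
Local Notation b := (a ^+ t.-1).
Local Notation ttbar := (fun k => map_poly pi (tt k)).
Local Notation K := (in_code tt (fun i : 'I_t.+1 => a ^+ i.-1 *: G i)).
Local Notation L := (in_code ttbar (fun i : 'I_t.+1 => map_mpoly pi (G i))).
Let scaleb_eq0 := scaleb_eq0 max_a t_gt0 at0 at1 ker_pi.
Let msupp_scaleb := msupp_scaleb max_a t_gt0 at0 at1 ker_pi.
Let hweight_scaleb := hweight_scaleb max_a t_gt0 at0 at1 ker_pi.

Lemma size_ttbar k : size (ttbar k) = size (tt k).
Proof. by rewrite size_map_poly_id0 // (monicP (tt_monic k)) rmorph1 oner_neq0. Qed.

Lemma inI_map_of_scaleb x : inI tt (b *: x) -> inI ttbar (map_mpoly pi x).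
Proof.
move=> /(nf_inI tt_monic); rewrite linearZ /= => /scaleb_eq0 nf0.
rewrite -(subrK (nf tt x) x) rmorphD /= nf0 addr0.
exact/inI_map/inI_sub_nf.
Qed.

Lemma in_code_map_of_scaleb w (h : 'I_t.+1 -> {mpoly R[r]}) :
  inI tt (b *: w - \sum_(i < t.+1 | (0 < i)%N) h i * G i) ->
  exists h' : 'I_t.+1 -> {mpoly F[r]},
    inI ttbar (map_mpoly pi w - \sum_(i < t.+1 | (0 < i)%N) h' i * map_mpoly pi (G i)).
Proof.
move=> Iw; have [e sep_e] := admissible_separating adm.
have [y Iy] := fin_all_exists (separating_in_gen tt_monic adm sep_e).
have Iw0 : inI tt (b *: (w * e ord0)).
  by rewrite scalerAl mulrC; apply: separating_mul0 sep_e Iw.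
exists (fun i => map_mpoly pi (w * e i * y i)).
set T := \sum_(i < t.+1 | (0 < i)%N) w * e i * y i * G i.
have -> : map_mpoly pi w - \sum_(i < t.+1 | (0 < i)%N)
      map_mpoly pi (w * e i * y i) * map_mpoly pi (G i) =
    map_mpoly pi (w * e ord0) + map_mpoly pi (w - w * e ord0 - T).
  rewrite -rmorphD (_ : w * e ord0 + (w - w * e ord0 - T) = w - T); last by ring.
  rewrite rmorphB rmorph_sum /=; congr (_ - _).
  by apply: eq_bigr => i _; rewrite [RHS]rmorphM.
apply: in_idealD; first exact: inI_map_of_scaleb.
exact/inI_map/(separating_decomp adm w sep_e Iy).
Qed.

Hypothesis pi_surj : forall y, exists x, pi x = y.

Lemma scaleb_in_code_of_map w (h' : 'I_t.+1 -> {mpoly F[r]}) :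
  inI ttbar (map_mpoly pi w - \sum_(i < t.+1 | (0 < i)%N) h' i * map_mpoly pi (G i)) ->
  exists h : 'I_t.+1 -> {mpoly R[r]},
    inI tt (b *: w - \sum_(i < t.+1 | (0 < i)%N) h i * (a ^+ i.-1 *: G i)).
Proof.
case=> g' Ew.
have [H H_lift] := fin_all_exists (fun i => map_mpoly_surj pi_surj (h' i)).
have [g g_lift] := fin_all_exists (fun k => map_mpoly_surj pi_surj (g' k)).
(* [b = a ^+ (t - i) * a ^+ i.-1] for [0 < i <= t]. *)
exists (fun i : 'I_t.+1 => a ^+ (t - i) *: H i).
set D := w - \sum_(i < t.+1 | (0 < i)%N) H i * G i - \sum_k g k * polyXk k (tt k).
have /scaleb_eq0 bD : map_mpoly pi D = 0.
  rewrite /D !rmorphB !rmorph_sum /=.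
  rewrite (eq_bigr (fun i => h' i * map_mpoly pi (G i))) => [|i _]; last first.
    by rewrite rmorphM /= H_lift.
  rewrite (eq_bigr (fun k => g' k * polyXk k (ttbar k))) => [|k _]; last first.
    by rewrite rmorphM /= g_lift map_polyXk.
  by rewrite Ew subrr.
have -> : \sum_(i < t.+1 | (0 < i)%N) (a ^+ (t - i) *: H i) * (a ^+ i.-1 *: G i) =
    b *: \sum_(i < t.+1 | (0 < i)%N) H i * G i.
  rewrite scaler_sumr; apply: eq_bigr => i i_gt0.
  rewrite -scalerAl -scalerAr scalerA -exprD; congr (_ ^+ _ *: _).
  by move: i_gt0 (ltn_ord i); clear; lia.
rewrite -scalerBr -(subrK (\sum_k g k * polyXk k (tt k)) (_ - _)) -/D scalerDr bD add0r.
by apply/in_idealZ/in_ideal_sum => k _; apply/in_idealMl/in_ideal_gen.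
Qed.

Lemma in_code_descend c :
  K c -> c != 0 -> exists l, L l /\ l != 0 /\ (hweight l <= hweight c)%N.
Proof.
case=> red_c [h Ic] c0.
have [k [akc0 akc1]] : exists k, a ^+ k *: c != 0 /\ a ^+ k.+1 *: c = 0.
  by apply: (scale_expr_last_neq0 (n := t)) c0; rewrite at0 scale0r.
have [w wE] : exists w, a ^+ k *: c = b *: w.
  by apply: (ann_a_scaleb chain max_a at1); rewrite scalerA -exprS.
have Iw : inI tt (b *: w - \sum_(i < t.+1 | (0 < i)%N) (a ^+ (k + i.-1) *: h i) * G i).
  have -> : \sum_(i < t.+1 | (0 < i)%N) (a ^+ (k + i.-1) *: h i) * G i =
      a ^+ k *: \sum_(i < t.+1 | (0 < i)%N) h i * (a ^+ i.-1 *: G i).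
    by rewrite scaler_sumr; apply: eq_bigr => i _; rewrite -scalerAl -scalerAr scalerA -exprD.
  by rewrite -wE -scalerBr; apply: in_idealZ.
have [h' Ih'] := in_code_map_of_scaleb Iw.
have supp_w : {subset msupp (map_mpoly pi w) <= msupp c}.
  by move=> m; rewrite -msupp_scaleb -wE => /msuppZ_le.
exists (map_mpoly pi w); split; [split|split].
- exact: reduced_msupp size_ttbar supp_w red_c.
- by exists h'.
- by move: akc0; apply: contra_neq => /scaleb_eq0 bw0; rewrite wE bw0.
- exact: uniq_leq_size (msupp_uniq _) supp_w.
Qed.

Lemma in_code_lift l :
  L l -> l != 0 -> exists c, K c /\ c != 0 /\ hweight c = hweight l.
Proof.
case=> red_l [h' Il] l0; have [w wl] := map_mpoly_surj pi_surj l.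
exists (b *: w); rewrite hweight_scaleb wl; split; [split|split] => //.
- apply: reduced_msupp _ _ red_l => [k|m]; first by rewrite size_ttbar.
  by rewrite msupp_scaleb wl.
- by rewrite -wl in Il; apply: scaleb_in_code_of_map Il.
- by move: l0; apply: contra_neq => /scaleb_eq0 w0; rewrite -wl w0.
Qed.

End Reduction.

Lemma is_min_dist_transfer (R S : comNzRingType) n
    (C : {mpoly R[n]} -> Prop) (D : {mpoly S[n]} -> Prop) :
  (forall c, C c -> c != 0 -> exists l, D l /\ l != 0 /\ (hweight l <= hweight c)%N) ->
  (forall l, D l -> l != 0 -> exists c, C c /\ c != 0 /\ hweight c = hweight l) ->
  forall d, is_min_dist C d <-> is_min_dist D d.
Proof.
move=> CD DC d; split=> [[[c [Cc [c0 <-]]] min_c]|[[l [Dl [l0 <-]]] min_l]].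
- have [l [Dl [l0 le_lc]]] := CD c Cc c0.
  split=> [|l' Dl' l0']; last first.
    by have [c' [Cc' [c0' <-]]] := DC l' Dl' l0'; apply: min_c.
  exists l; split=> //; split=> //; apply/eqP; rewrite eqn_leq le_lc.
  by have [c' [Cc' [c0' <-]]] := DC l Dl l0; apply: min_c.
- have [c [Cc [c0 wc]]] := DC l Dl l0.
  split=> [|c' Cc' c0']; first by exists c.
  by have [l' [Dl' [l0' le']]] := CD c' Cc' c0'; apply: leq_trans (min_l _ Dl' l0') le'.
Qed.

Theorem mainTheorem7
  (R : finComUnitRingType) (F : finFieldType) (pi : {rmorphism R -> F})
  (a : R) (t r : nat) (tt : 'I_r -> {poly R}) (G : 'I_t.+1 -> {mpoly R[r]}) :
  chain_ring R ->
  max_ideal_gen a ->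
  (0 < t)%N -> a ^+ t = 0 -> a ^+ t.-1 != 0 ->
  (forall x : R, pi x = 0 <-> rdvd a x) ->
  (forall y : F, exists x : R, pi x = y) ->
  (forall k, tt k \is monic) ->
  (forall k, square_free (map_poly pi (tt k))) ->
  admissible tt G ->
  forall d : nat,
    is_min_dist (in_code tt (fun i : 'I_t.+1 => a ^+ i.-1 *: G i)) d <->
    is_min_dist (in_code (fun k => map_poly pi (tt k))
                         (fun i : 'I_t.+1 => map_mpoly pi (G i))) d.
Proof.
move=> chain max_a t_gt0 at0 at1 ker_pi pi_surj tt_monic _ adm.
apply: is_min_dist_transfer.
- exact: in_code_descend chain max_a t_gt0 at0 at1 ker_pi tt_monic adm.
- exact: in_code_lift max_a t_gt0 at0 at1 ker_pi tt_monic pi_surj.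
Qed.
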